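(* The free semigroup of rank 1 with a zero adjoined, i.e. the semigroup with presentation $\langle a,b\mid b^2=b,\ ab=ba=b\rangle$, is not isomorphic to any automaton semigroup.
   Context: A synchronous automaton is $(Q,\Sigma,t,o)$ with $Q$ a finite set of states, $\Sigma$ a finite alphabet, $t:Q\times\Sigma\to Q$ and $o:Q\times\Sigma\to\Sigma$. Each state $q$ induces $q:\Sigma^*\to\Sigma^*$ by $q(\emptyset)=\emptyset$, $q(\sigma w)=o(q,\sigma)\,q'(w)$ with $q'=t(q,\sigma)$. An automaton semigroup is the semigroup of maps generated under composition by the states of a synchronous automaton. *)

From mathcomp Require Import all_boot.
Set Implicit Arguments. Unset Strict Implicit. Unset Printing Implicit Defensive.

Section Automaton.
Variables (Q Sigma : finType) (t : Q -> Sigma -> Q) (o : Q -> Sigma -> Sigma).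

Fixpoint state_map (q : Q) (w : seq Sigma) : seq Sigma :=
  match w with
  | [::] => [::]
  | s :: w' => o q s :: state_map (t q s) w'
  end.

Definition state_comp (q : Q) (qs : seq Q) : seq Sigma -> seq Sigma :=
  foldr (fun p g => state_map p \o g) (state_map q) qs.

Definition in_automaton_semigroup (f : seq Sigma -> seq Sigma) : Prop :=
  exists (q : Q) (qs : seq Q), forall w, f w = state_comp q qs w.
End Automaton.

(* Normal forms: Some n represents a^(n+1), None represents b (the zero). *)
Definition FreeMonoZero := option nat.

Definition fmz_mul (x y : FreeMonoZero) : FreeMonoZero :=
  match x, y with
  | Some m, Some n => Some (m + n + 1)
  | _, _ => None
  end.

Definition iso_to_automaton_semigroup (Q Sigma : finType)
    (t : Q -> Sigma -> Q) (o : Q -> Sigma -> Sigma)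
    (phi : FreeMonoZero -> seq Sigma -> seq Sigma) : Prop :=
  [/\ forall x y, (forall w, phi (fmz_mul x y) w = (phi x \o phi y) w),
      forall x y, (forall w, phi x w = phi y w) -> x = y,
      forall x, in_automaton_semigroup t o (phi x)
    & forall f, in_automaton_semigroup t o f ->
        exists x, forall w, phi x w = f w].

From mathcomp Require Import all_boot.
From Stdlib Require Import ClassicalEpsilon.
Set Implicit Arguments. Unset Strict Implicit. Unset Printing Implicit Defensive.

(* Since a is not a product, it acts as a single state of the automaton, and
   its section at any letter x is some element a^k or the zero b; writing f for
   the output function of a, a^(n+1) maps x w to f^(n+1)(x) followed by the
   image of w under the product of the sections along the f-orbit of x.
   Comparing with a state of maximal exponent a^(m+1) shows that every letter
   whose orbit never meets a zero section has section exactly a.  On a finite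
   alphabet a zero along the orbit is met within |Sigma| steps and f is
   eventually periodic, so a^(M+1) = a^(M'+1) for some M < M': a would have
   finite order. *)

Lemma fmz_mul_eqNone x y : (fmz_mul x y == None) = (x == None) || (y == None).
Proof. by case: x y => [?|] [?|]. Qed.

Lemma fmz_mul_neq_Some0 x y : fmz_mul x y <> Some 0.
Proof. by case: x y => [a|] [b|] //= [/eqP]; rewrite addn1. Qed.

Lemma iter_eventually_periodic (T : finType) (f : T -> T) K :
  exists M M', [/\ K <= M, M < M' & iter M f =1 iter M' f].
Proof.
pose g (i : 'I_#|{ffun T -> T}|.+1) := [ffun y => iter (K + i) f y].
have /injectivePn [i [j neq_ij eq_gij]] : ~~ injectiveb g.
  by apply/injectiveP => /leq_card; rewrite card_ord ltnn.
have iter_eq y : iter (K + i) f y = iter (K + j) f y.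
  by have := congr1 (fun h : {ffun T -> T} => h y) eq_gij; rewrite !ffunE.
case: (ltngtP i j) => [lt_ij | lt_ji | eq_ij].
- by exists (K + i), (K + j); rewrite leq_addr ltn_add2l.
- by exists (K + j), (K + i); rewrite leq_addr ltn_add2l; split=> // y.
- by rewrite (val_inj eq_ij) eqxx in neq_ij.
Qed.

Section OrbitProduct.
Variables (Sigma : finType) (f : Sigma -> Sigma) (sect : Sigma -> FreeMonoZero).

Fixpoint orbit_prod n x :=
  if n is n'.+1 then fmz_mul (orbit_prod n' (f x)) (sect x) else sect x.

Definition nonvanishing x := forall n, orbit_prod n x <> None.

Lemma orbit_prod_NoneP n x :
  reflect (exists2 i, i <= n & sect (iter i f x) = None)
          (orbit_prod n x == None).
Proof.
elim: n x => [|n IH] x /=.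
  by apply: (iffP eqP) => [|[i]]; [exists 0 | rewrite leqn0 => /eqP ->].
rewrite fmz_mul_eqNone; apply: (iffP orP).
  case=> [/IH [i le_in zi] | /eqP zx]; last by exists 0.
  by exists i.+1; rewrite // iterSr.
case=> [[|i] le_in zi]; first by right; apply/eqP.
by left; apply/IH; exists i; rewrite // -iterSr.
Qed.

Lemma orbit_prod_None_card N n x :
  orbit_prod N x = None -> #|Sigma| <= n -> orbit_prod n x = None.
Proof.
move=> /eqP/orbit_prod_NoneP [i _ zi] le_n; apply/eqP/orbit_prod_NoneP.
have fx_i := fconnect_iter f i x.
exists (findex f x (iter i f x)); last by rewrite iter_findex.
exact: ltnW (leq_trans (findex_max fx_i) (leq_trans (max_card _) le_n)).
Qed.

Lemma orbit_prod_Some n x e :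
  orbit_prod n x = Some e -> exists2 k, sect x = Some k & n + k <= e.
Proof.
elim: n x e => [|n IH] x e /=; first by move->; exists e.
case: (orbit_prod n (f x)) (IH (f x)) => [e1|] // /(_ e1 erefl) [k1 _ le_e1].
case: (sect x) => [k|] // [<-]; exists k => //.
by rewrite addn1 addSn ltnS leq_add2r (leq_trans (leq_addr k1 n)).
Qed.

Lemma nonvanishing_succ x : nonvanishing x -> nonvanishing (f x).
Proof. by move=> nv n zn; apply: (nv n.+1); rewrite /= zn. Qed.

Lemma orbit_prod_nonvanishing :
  (forall y, nonvanishing y -> sect y = Some 0) ->
  forall n x, nonvanishing x -> orbit_prod n x = Some n.
Proof.
move=> sect0; elim=> [|n IH] x nv /=; first exact: sect0.
by rewrite IH ?sect0 //= ?addn0 ?addn1 //; exact: nonvanishing_succ.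
Qed.

End OrbitProduct.

Section AutomatonIsomorphism.
Variables (Q Sigma : finType) (t : Q -> Sigma -> Q) (o : Q -> Sigma -> Sigma).
Variable phi : FreeMonoZero -> seq Sigma -> seq Sigma.
Hypothesis phiP : iso_to_automaton_semigroup t o phi.

Lemma phi_mul x y w : phi (fmz_mul x y) w = phi x (phi y w).
Proof. by case: phiP. Qed.

Lemma phi_inj x y : phi x =1 phi y -> x = y.
Proof. by case: phiP => _ inj _ _; apply: inj. Qed.

Lemma phi_Some k : phi (Some k) =1 iter k.+1 (phi (Some 0)).
Proof.
elim: k => [|k IH] w //.
by have := phi_mul (Some 0) (Some k) w; rewrite /= add0n addn1 => ->; rewrite IH.
Qed.

Lemma state_in_image q : exists x, phi x =1 state_map t o q.
Proof. by case: phiP => _ _ _; apply; exists q, [::]. Qed.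

Definition state_elt q :=
  proj1_sig (constructive_indefinite_description _ (state_in_image q)).

Lemma state_eltP q : phi (state_elt q) =1 state_map t o q.
Proof. exact: proj2_sig (constructive_indefinite_description _ (state_in_image q)). Qed.

Lemma state_comp_phi q qs :
  state_comp t o q qs =1 phi (foldr fmz_mul (state_elt q) (map state_elt qs)).
Proof.
elim: qs => [|p qs IH] w /=; first by rewrite state_eltP.
by rewrite phi_mul -IH state_eltP.
Qed.

Lemma generator_state : exists qa, state_map t o qa =1 phi (Some 0).
Proof.
case: phiP => _ _ phi_in _; have [q [qs phiE]] := phi_in (Some 0).
have : Some 0 = foldr fmz_mul (state_elt q) (map state_elt qs).
  by apply: phi_inj => w; rewrite phiE state_comp_phi.
case: qs phiE => [|p qs] phiE /=; last by move/esym/fmz_mul_neq_Some0.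
by move=> _; exists q => w; rewrite phiE.
Qed.

Variable qa : Q.
Hypothesis qaP : state_map t o qa =1 phi (Some 0).

Local Notation gen := (phi (Some 0)).
Local Notation f := (o qa).
Local Notation sect := (fun x => state_elt (t qa x)).

Lemma state_elt_qa : state_elt qa = Some 0.
Proof. by apply: phi_inj => w; rewrite state_eltP qaP. Qed.

Lemma iter_gen_nil n : iter n gen [::] = [::].
Proof. by elim: n => //= n ->; rewrite -qaP. Qed.

Lemma iter_gen_cons n x w :
  iter n.+1 gen (x :: w) = iter n.+1 f x :: phi (orbit_prod f sect n x) w.
Proof.
elim: n x w => [|n IH] x w; first by rewrite /= -qaP /= state_eltP.
by rewrite iterSr -qaP [state_map _ _ _ _]/= -state_eltP IH -iterSr phi_mul.
Qed.

Lemma max_state : exists r m,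
  state_elt r = Some m /\ forall q k, state_elt q = Some k -> k <= m.
Proof.
have qa_some : state_elt qa != None by rewrite state_elt_qa.
case: (@arg_maxnP _ qa (fun q => state_elt q != None)
                  (fun q => odflt 0 (state_elt q)) qa_some) => r.
case Er: (state_elt r) => [m|] // _ max_r; exists r, m; split=> // q k qk.
by have := max_r q; rewrite qk; apply.
Qed.

(* The section of a^(m+1) at x is the orbit product of length m+1, whose
   exponent is at least m plus the exponent of the section of a at x. *)
Lemma sect_nonvanishing x : nonvanishing f sect x -> sect x = Some 0.
Proof.
move=> nv; have [r [m [rm max_m]]] := max_state.
have tr_x : state_elt (t r x) = orbit_prod f sect m x.
  apply: phi_inj => w; rewrite state_eltP.
  have := iter_gen_cons m x w; rewrite -phi_Some -rm state_eltP /=.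
  by case.
case E: (orbit_prod f sect m x) tr_x => [e|] tr_x; last by case: (nv m).
have [k -> le_mk] := orbit_prod_Some E.
have := leq_trans le_mk (max_m _ _ tr_x).
by rewrite -{2}[m]addn0 leq_add2l leqn0 => /eqP ->.
Qed.

Lemma phi_Some_eq M M' :
  #|Sigma| <= M -> M <= M' -> iter M f =1 iter M' f ->
  phi (Some M) =1 phi (Some M').
Proof.
move=> le_M le_MM' perM w; rewrite !phi_Some.
elim: w => [|x w IH]; first by rewrite !iter_gen_nil.
rewrite !iter_gen_cons !iterSr perM.
case: (boolP (orbit_prod f sect M x == None)) => [/eqP zM | nzM].
  by rewrite zM (orbit_prod_None_card zM (leq_trans le_M le_MM')).
have nv : nonvanishing f sect x.
  by move=> N zN; rewrite (orbit_prod_None_card zN le_M) in nzM.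
by rewrite !(orbit_prod_nonvanishing sect_nonvanishing) // !phi_Some IH.
Qed.

End AutomatonIsomorphism.

Theorem mainTheorem14 :
  forall (Q Sigma : finType) (t : Q -> Sigma -> Q) (o : Q -> Sigma -> Sigma),
    ~ exists phi : FreeMonoZero -> seq Sigma -> seq Sigma,
        iso_to_automaton_semigroup t o phi.
Proof.
move=> Q Sigma t o [phi phiP].
have [qa qaP] := generator_state phiP.
have [M [M' [le_M lt_MM' perM]]] := iter_eventually_periodic (o qa) #|Sigma|.
have [eq_MM'] := phi_inj phiP (phi_Some_eq phiP qaP le_M (ltnW lt_MM') perM).
by rewrite eq_MM' ltnn in lt_MM'.
Qed.
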